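(* Let $\gamma: I \to M$ be a unit speed curve on a smooth oriented surface $M\subset E^3$ with Darboux frame $\{T,V,U\}$, nowhere-vanishing normal curvature $k_n$, geodesic curvature $k_g$ and geodesic torsion $\tau_g$, and suppose the position vector of $\gamma$ always lies in the plane spanned by $\{T, V\}$, i.e. $\gamma(s) = \mu_1(s)T(s) + \mu_2(s)V(s)$ for differentiable functions $\mu_1,\mu_2$. Then $\gamma$ is an isophotic curve if and only if the function $$s\mapsto \frac{k_n^2}{(k_n^2+\tau_g^2)^{3/2}}\, e^{-\int \frac{\tau_g k_g}{k_n}\, ds}$$ is constant.
   Context: For a unit speed curve $\gamma$ on an oriented surface $M\subset E^3$, the Darboux frame is $T=\gamma'$, $U$ = unit normal of $M$ along $\gamma$, $V = U\times T$, satisfying $T' = k_g V + k_n U$, $V' = -k_g T + \tau_g U$, $U' = -k_n T - \tau_g V$; here $k_g$, $k_n$, $\tau_g$ are the geodesic curvature, normal curvature and geodesic torsion. The curve $\gamma$ is an isophotic curve if there is a fixed unit vector $d$ and a constant angle $\phi$ with $\langle U, d\rangle = \cos\phi$ along $\gamma$. $\int\cdot\,ds$ denotes an antiderivative. *)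

From Stdlib Require Import Reals.
From Coquelicot Require Import Coquelicot.
Open Scope R_scope.

Definition vec3 : Type := (R * R * R)%type.
Definition vx (v : vec3) : R := fst (fst v).
Definition vy (v : vec3) : R := snd (fst v).
Definition vz (v : vec3) : R := snd v.
Definition mkv (x y z : R) : vec3 := (x, y, z).

Definition vadd (u v : vec3) : vec3 := mkv (vx u + vx v) (vy u + vy v) (vz u + vz v).
Definition vscale (c : R) (v : vec3) : vec3 := mkv (c * vx v) (c * vy v) (c * vz v).
Definition dot (u v : vec3) : R := vx u * vx v + vy u * vy v + vz u * vz v.
Definition cross (u v : vec3) : vec3 :=
  mkv (vy u * vz v - vz u * vy v)
      (vz u * vx v - vx u * vz v)
      (vx u * vy v - vy u * vx v).

Definition vderiv (f : R -> vec3) (s : R) (f' : vec3) : Prop :=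
  is_derive (fun t => vx (f t)) s (vx f') /\
  is_derive (fun t => vy (f t)) s (vy f') /\
  is_derive (fun t => vz (f t)) s (vz f').

Definition inI (a b : Rbar) (s : R) : Prop := Rbar_lt a s /\ Rbar_lt s b.

Definition isophotic (a b : Rbar) (U : R -> vec3) : Prop :=
  exists (d : vec3) (phi : R), dot d d = 1 /\
    forall s, inI a b s -> dot (U s) d = cos phi.

(* Write q = <gamma, T> and m = <gamma, V> for the tangential coordinates of
   the position vector.  Since <gamma, U> = 0, the Darboux equations give
   q' = 1 + kg m, m' = -kg q and kn q + taug m = 0.  Two consequences:
   (1) C = m e^(-A) has derivative 0, so it is a nonzero constant, and the
       function of the theorem equals C / G with
       G = m (kn^2 + taug^2)^(3/2) / kn^2;  hence it is constant iff G is.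
   (2) A fixed vector d = al T + be V + c U is described by coefficients
       solving the Darboux system al' = kg be + kn c, be' = -kg al + taug c,
       kn al + taug be = 0 (with c = <U, d> constant), and conversely.
       Combining this system with the relations for q and m forces
       be = c (kn m - taug q), and then al^2 + be^2 = c^2 G^2, so
       c^2 (1 + G^2) = |d|^2.
   Isophotic => G^2 is constant, hence G (continuous, nonvanishing) is.
   G = K constant => with c = 1/sqrt(1+K^2) and u = c (kn^2+taug^2)/kn the
   coefficients al = q u, be = m u solve the Darboux system, so the resulting
   vector d is a fixed unit vector with <U, d> = c. *)

From Stdlib Require Import Reals Lra Psatz.
From Coquelicot Require Import Coquelicot.
Open Scope R_scope.

Lemma is_derive_Rplus (f g : R -> R) (x df dg : R) :
  is_derive f x df -> is_derive g x dg -> is_derive (fun t => f t + g t) x (df + dg).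
Proof. intros; apply (@is_derive_plus R_AbsRing R_NormedModule); auto. Qed.

Lemma is_derive_Rminus (f g : R -> R) (x df dg : R) :
  is_derive f x df -> is_derive g x dg -> is_derive (fun t => f t - g t) x (df - dg).
Proof. intros; apply (@is_derive_minus R_AbsRing R_NormedModule); auto. Qed.

Lemma is_derive_Rmult (f g : R -> R) (x df dg : R) :
  is_derive f x df -> is_derive g x dg ->
  is_derive (fun t => f t * g t) x (df * g x + f x * dg).
Proof. intros; apply (@is_derive_mult R_AbsRing); auto. intros; apply Rmult_comm. Qed.

Lemma is_derive_Rconst (k x : R) : is_derive (fun _ => k) x 0.
Proof. exact (@is_derive_const R_AbsRing R_NormedModule k x). Qed.

Lemma is_derive_continuity_pt (f : R -> R) (x l : R) : is_derive f x l -> continuity_pt f x.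
Proof.
  intros H. apply continuity_pt_filterlim.
  apply (@ex_derive_continuous R_AbsRing R_NormedModule). exists l; exact H.
Qed.

Lemma is_derive_exp_opp (f : R -> R) (x l : R) :
  is_derive f x l -> is_derive (fun t => exp (- f t)) x (- l * exp (- f x)).
Proof.
  intros H. auto_derive; [exists l; exact H|].
  replace (Derive (fun t => f t) x) with l by (symmetry; apply is_derive_unique; exact H).
  ring.
Qed.

Lemma is_derive_eq (f : R -> R) (x l l' : R) : is_derive f x l -> l = l' -> is_derive f x l'.
Proof. intros H ->; exact H. Qed.

Lemma continuity_pt_sq (f : R -> R) x : continuity_pt f x -> continuity_pt (fun t => f t ^ 2) x.
Proof.
  intros H. apply (continuity_pt_comp f (fun y => y ^ 2)); auto.
  apply derivable_continuous_pt, derivable_pt_pow.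
Qed.

Lemma continuity_pt_Rpower (f : R -> R) y x :
  continuity_pt f x -> 0 < f x -> continuity_pt (fun t => Rpower (f t) y) x.
Proof.
  intros H Hpos. apply (continuity_pt_comp f (fun z => Rpower z y)); auto.
  apply derivable_continuous_pt. exists (y * Rpower (f x) (y - 1)).
  apply derivable_pt_lim_power; exact Hpos.
Qed.

Lemma Rpower_three_halves_sq x : 0 < x -> Rpower x (3 / 2) ^ 2 = x ^ 3.
Proof.
  intros Hx. assert (Hp : 0 < Rpower x (3 / 2)) by (unfold Rpower; apply exp_pos).
  rewrite <- (Rpower_pow 2) by exact Hp. rewrite Rpower_mult, <- Rpower_pow by exact Hx.
  f_equal. simpl. field.
Qed.

Lemma same_sign_near x y : Rabs (y - x) < Rabs x -> 0 < y * x.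
Proof. unfold Rabs; repeat destruct Rcase_abs; intros; nra. Qed.

Lemma is_derive_of_sq (f h : R -> R) (x dh : R) :
  continuity_pt f x -> f x <> 0 -> locally x (fun t => f t ^ 2 = h t) ->
  is_derive h x dh -> is_derive f x (dh / (2 * f x)).
Proof.
  intros Hf Hfx Hsq Hh.
  assert (Hx : f x ^ 2 = h x) by exact (locally_singleton _ _ Hsq).
  assert (Habs : 0 < Rabs (f x)) by (apply Rabs_pos_lt; exact Hfx).
  assert (Hnear : locally x (fun t => Rabs (f t - f x) < Rabs (f x))).
  { apply continuity_pt_filterlim in Hf.
    apply (Hf (fun y => Rabs (y - f x) < Rabs (f x))).
    exact (locally_ball (f x) (mkposreal _ Habs)). }
  (* near x, f = sign (f x) * sqrt h *)
  apply (is_derive_ext_loc (fun t => f x / Rabs (f x) * sqrt (h t))).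
  - generalize (filter_and _ _ Hsq Hnear). apply filter_imp. intros t [Ht Hc].
    apply same_sign_near in Hc.
    change (f x / Rabs (f x) * sqrt (h t) = f t).
    rewrite <- Ht, <- pow2_abs, sqrt_pow2 by apply Rabs_pos.
    destruct (Rle_lt_dec 0 (f x)).
    + rewrite (Rabs_pos_eq (f x)), (Rabs_pos_eq (f t)) by nra. field; exact Hfx.
    + rewrite (Rabs_left (f x)), (Rabs_left (f t)) by nra. field; exact Hfx.
  - eapply is_derive_eq.
    + apply is_derive_scal, is_derive_sqrt; [exact Hh|].
      rewrite <- Hx. apply pow2_gt_0; exact Hfx.
    + rewrite <- Hx, <- pow2_abs, sqrt_pow2 by apply Rabs_pos.
      field_simplify_eq; [rewrite pow2_abs; reflexivity | split; lra].
Qed.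

Section OpenInterval.
Variables a b : Rbar.

Lemma inI_locally x : inI a b x -> locally x (inI a b).
Proof.
  intros [Ha Hb]. destruct (Rbar_lt_locally a b x Ha Hb) as [delta Hd].
  exists delta. intros y Hy. apply Hd. exact Hy.
Qed.

Lemma inI_between x y z : inI a b x -> inI a b y -> Rmin x y <= z <= Rmax x y -> inI a b z.
Proof.
  unfold inI, Rmin, Rmax; intros [H1 H2] [H3 H4] [H5 H6].
  destruct (Rle_dec x y); split; destruct a, b; simpl in *; lra.
Qed.

Lemma inI_nonempty : Rbar_lt a b -> exists x, inI a b x.
Proof.
  unfold inI; destruct a as [x| |], b as [y| |]; simpl; intros H; try contradiction.
  - exists ((x + y) / 2); simpl; lra.
  - exists (x + 1); simpl; lra.
  - exists (y - 1); simpl; lra.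
  - exists 0; simpl; auto.
Qed.

Definition constant_on (f : R -> R) : Prop :=
  forall x y, inI a b x -> inI a b y -> f x = f y.

Lemma constant_on_exists (f : R -> R) :
  Rbar_lt a b -> (constant_on f <-> exists c, forall s, inI a b s -> f s = c).
Proof.
  intros Hab. split.
  - intros Hf. destruct (inI_nonempty Hab) as [x0 Hx0].
    exists (f x0). intros s Hs. apply Hf; auto.
  - intros [c Hc] x y Hx Hy. rewrite Hc, Hc; auto.
Qed.

Lemma deriv_of_constant (f : R -> R) (k x l : R) :
  (forall t, inI a b t -> f t = k) -> inI a b x -> is_derive f x l -> l = 0.
Proof.
  intros Hf Hx Hd.
  assert (H0 : is_derive f x 0).
  { apply (is_derive_ext_loc (fun _ => k)); [|apply is_derive_Rconst].
    apply (filter_imp (inI a b)); [|apply inI_locally; exact Hx].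
    intros t Ht; symmetry; auto. }
  apply is_derive_unique in Hd. apply is_derive_unique in H0. congruence.
Qed.

Lemma constant_of_deriv_zero (f : R -> R) :
  (forall t, inI a b t -> is_derive f t 0) -> constant_on f.
Proof.
  intros Hd x y Hx Hy.
  destruct (MVT_gen f x y (fun _ => 0)) as [c [_ Hc]]; [| |lra].
  - intros z Hz. apply Hd. apply (inI_between x y); auto; lra.
  - intros z Hz. apply (is_derive_continuity_pt f z 0), Hd.
    apply (inI_between x y); auto.
Qed.

Lemma constant_of_sq_constant (f : R -> R) (k : R) :
  (forall t, inI a b t -> continuity_pt f t) -> (forall t, inI a b t -> f t <> 0) ->
  (forall t, inI a b t -> f t ^ 2 = k) -> constant_on f.
Proof.
  intros Hc Hnz Hsq. apply constant_of_deriv_zero. intros t Ht.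
  eapply is_derive_eq.
  - apply (is_derive_of_sq f (fun _ => k)); auto; [|apply is_derive_Rconst].
    apply (filter_imp (inI a b)); [exact Hsq|apply inI_locally; exact Ht].
  - unfold Rdiv; ring.
Qed.

End OpenInterval.

Definition lincomb3 (x y z : R) (T V U : vec3) : vec3 :=
  vadd (vscale x T) (vadd (vscale y V) (vscale z U)).

Lemma dot_sym u v : dot u v = dot v u.
Proof. unfold dot; ring. Qed.

Lemma dot_lincomb2 x y T V w : dot (vadd (vscale x T) (vscale y V)) w = x * dot T w + y * dot V w.
Proof. unfold dot, vadd, vscale, mkv, vx, vy, vz; simpl; ring. Qed.

Lemma dot_lincomb3 x y z T V U w :
  dot (lincomb3 x y z T V U) w = x * dot T w + y * dot V w + z * dot U w.
Proof. unfold lincomb3, dot, vadd, vscale, mkv, vx, vy, vz; simpl; ring. Qed.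

Lemma cross_dot_l u t : dot (cross u t) u = 0.
Proof. unfold dot, cross, mkv, vx, vy, vz; simpl; ring. Qed.

Lemma cross_dot_r u t : dot (cross u t) t = 0.
Proof. unfold dot, cross, mkv, vx, vy, vz; simpl; ring. Qed.

Lemma cross_norm u t : dot (cross u t) (cross u t) = dot u u * dot t t - dot u t ^ 2.
Proof. unfold dot, cross, mkv, vx, vy, vz; simpl; ring. Qed.

Lemma dot_cross_sq d u t : dot d (cross u t) ^ 2 = dot d d * dot u u * dot t t
  + 2 * dot d u * dot u t * dot t d - dot d d * dot u t ^ 2 - dot u u * dot d t ^ 2
  - dot t t * dot d u ^ 2.
Proof. unfold dot, cross, mkv, vx, vy, vz; simpl; ring. Qed.

Lemma vec3_ext u v : (forall e, dot u e = dot v e) -> u = v.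
Proof.
  intros H. destruct u as [[u1 u2] u3], v as [[v1 v2] v3].
  assert (H1 := H (mkv 1 0 0)). assert (H2 := H (mkv 0 1 0)). assert (H3 := H (mkv 0 0 1)).
  unfold dot, mkv, vx, vy, vz in *; simpl in *. f_equal; [f_equal|]; lra.
Qed.

Lemma dot_deriv (f g : R -> vec3) s f' g' : vderiv f s f' -> vderiv g s g' ->
  is_derive (fun t => dot (f t) (g t)) s (dot f' (g s) + dot (f s) g').
Proof.
  intros [F1 [F2 F3]] [G1 [G2 G3]]. unfold dot.
  eapply is_derive_eq.
  - apply is_derive_Rplus; [apply is_derive_Rplus|];
      apply (is_derive_Rmult (fun t => _ (f t)) (fun t => _ (g t))); eauto.
  - ring.
Qed.

Lemma dot_const_deriv (f : R -> vec3) d s f' : vderiv f s f' ->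
  is_derive (fun t => dot (f t) d) s (dot f' d).
Proof.
  intros Hf. eapply is_derive_eq.
  - apply (dot_deriv f (fun _ => d) s f' (mkv 0 0 0)); [exact Hf|].
    split; [|split]; apply is_derive_Rconst.
  - unfold dot, vx, vy, vz; simpl; ring.
Qed.

Lemma tangential_norm kn tau m q c al be : kn <> 0 ->
  kn * q + tau * m = 0 -> kn * al + tau * be = 0 -> be = c * (kn * m - tau * q) ->
  al ^ 2 + be ^ 2 = c ^ 2 * (m ^ 2 * (kn ^ 2 + tau ^ 2) ^ 3 / kn ^ 4).
Proof.
  intros Hkn Hq Hal Hbe.
  assert (Eq : q = - tau * m / kn) by (field_simplify_eq; lra).
  assert (Eal : al = - tau * be / kn) by (field_simplify_eq; lra).
  rewrite Eal, Hbe, Eq. field. exact Hkn.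
Qed.

Section DarbouxFrame.
Variables (a b : Rbar) (T V U : R -> vec3) (kg kn taug : R -> R).
Hypothesis HTT : forall s, inI a b s -> dot (T s) (T s) = 1.
Hypothesis HUU : forall s, inI a b s -> dot (U s) (U s) = 1.
Hypothesis HTU : forall s, inI a b s -> dot (T s) (U s) = 0.
Hypothesis HV : forall s, inI a b s -> V s = cross (U s) (T s).
Hypothesis HdT : forall s, inI a b s ->
  vderiv T s (vadd (vscale (kg s) (V s)) (vscale (kn s) (U s))).
Hypothesis HdV : forall s, inI a b s ->
  vderiv V s (vadd (vscale (- kg s) (T s)) (vscale (taug s) (U s))).
Hypothesis HdU : forall s, inI a b s ->
  vderiv U s (vadd (vscale (- kn s) (T s)) (vscale (- taug s) (V s))).

Lemma V_orthonormal s : inI a b s ->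
  dot (V s) (V s) = 1 /\ dot (V s) (T s) = 0 /\ dot (V s) (U s) = 0.
Proof.
  intros Hs. rewrite HV by exact Hs. repeat split.
  - rewrite cross_norm, HUU, HTT, dot_sym, HTU by exact Hs. ring.
  - apply cross_dot_r.
  - apply cross_dot_l.
Qed.

Lemma frame_parseval d s : inI a b s ->
  dot (T s) d ^ 2 + dot (V s) d ^ 2 + dot (U s) d ^ 2 = dot d d.
Proof.
  intros Hs. assert (G := dot_cross_sq d (U s) (T s)).
  rewrite <- HV, HUU, HTT, (dot_sym (U s)), HTU in G by exact Hs.
  rewrite (dot_sym d (V s)), (dot_sym d (T s)), (dot_sym d (U s)) in G. lra.
Qed.

Lemma lincomb3_coords s x y z : inI a b s ->
  let w := lincomb3 x y z (T s) (V s) (U s) in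
  dot (T s) w = x /\ dot (V s) w = y /\ dot (U s) w = z.
Proof.
  intros Hs w. destruct (V_orthonormal s Hs) as [HVV [HVT HVU]].
  unfold w; rewrite !(dot_sym (_ s) (lincomb3 _ _ _ _ _ _)), !dot_lincomb3.
  rewrite HTT, HUU, HVV, HTU, HVT, HVU, (dot_sym (T s) (V s)), (dot_sym (U s) (T s)),
    (dot_sym (U s) (V s)), HVT, HTU, HVU by exact Hs.
  repeat split; ring.
Qed.

Lemma coordT_deriv d s : inI a b s ->
  is_derive (fun t => dot (T t) d) s (kg s * dot (V s) d + kn s * dot (U s) d).
Proof.
  intros Hs. eapply is_derive_eq; [apply dot_const_deriv, HdT, Hs|apply dot_lincomb2].
Qed.

Lemma coordV_deriv d s : inI a b s ->
  is_derive (fun t => dot (V t) d) s (- kg s * dot (T s) d + taug s * dot (U s) d).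
Proof.
  intros Hs. eapply is_derive_eq; [apply dot_const_deriv, HdV, Hs|apply dot_lincomb2].
Qed.

Lemma coordU_deriv d s : inI a b s ->
  is_derive (fun t => dot (U t) d) s (- kn s * dot (T s) d - taug s * dot (V s) d).
Proof.
  intros Hs. eapply is_derive_eq; [apply dot_const_deriv, HdU, Hs|].
  rewrite dot_lincomb2. ring.
Qed.

Lemma fixed_vector_relation d c :
  (forall s, inI a b s -> dot (U s) d = c) ->
  forall s, inI a b s -> kn s * dot (T s) d + taug s * dot (V s) d = 0.
Proof.
  intros Hd s Hs.
  assert (Z := deriv_of_constant a b _ c s _ Hd Hs (coordU_deriv d s Hs)). lra.
Qed.

Lemma darboux_solution_constant (al be : R -> R) c :
  (forall s, inI a b s -> is_derive al s (kg s * be s + kn s * c)) ->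
  (forall s, inI a b s -> is_derive be s (- kg s * al s + taug s * c)) ->
  (forall s, inI a b s -> kn s * al s + taug s * be s = 0) ->
  forall x y, inI a b x -> inI a b y ->
  lincomb3 (al x) (be x) c (T x) (V x) (U x) = lincomb3 (al y) (be y) c (T y) (V y) (U y).
Proof.
  intros Dal Dbe Hrel x y Hx Hy. apply vec3_ext. intros e.
  apply (constant_of_deriv_zero a b (fun t => dot (lincomb3 (al t) (be t) c (T t) (V t) (U t)) e));
    auto.
  intros s Hs.
  apply (is_derive_ext (fun t => al t * dot (T t) e + be t * dot (V t) e + c * dot (U t) e)).
  { intros t; rewrite dot_lincomb3; reflexivity. }
  eapply is_derive_eq.
  - apply is_derive_Rplus; [apply is_derive_Rplus|]; apply is_derive_Rmult;
      auto using is_derive_Rconst, coordT_deriv, coordV_deriv, coordU_deriv.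
  - transitivity (dot (U s) e * (kn s * al s + taug s * be s)); [cbv beta; ring|].
    rewrite Hrel by exact Hs. ring.
Qed.

Lemma isophotic_of_darboux_solution (al be : R -> R) c x0 :
  inI a b x0 ->
  (forall s, inI a b s -> is_derive al s (kg s * be s + kn s * c)) ->
  (forall s, inI a b s -> is_derive be s (- kg s * al s + taug s * c)) ->
  (forall s, inI a b s -> kn s * al s + taug s * be s = 0) ->
  al x0 ^ 2 + be x0 ^ 2 + c ^ 2 = 1 -> isophotic a b U.
Proof.
  intros Hx0 Dal Dbe Hrel Hunit.
  set (d := lincomb3 (al x0) (be x0) c (T x0) (V x0) (U x0)).
  assert (Hc : forall s, inI a b s -> dot (U s) d = c).
  { intros s Hs. unfold d.
    rewrite <- (darboux_solution_constant al be c Dal Dbe Hrel s x0) by auto.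
    apply (lincomb3_coords s); exact Hs. }
  assert (Hd1 : dot d d = 1).
  { rewrite <- (frame_parseval d x0 Hx0). unfold d.
    destruct (lincomb3_coords x0 (al x0) (be x0) c Hx0) as [-> [-> ->]]. exact Hunit. }
  exists d, (acos c). split; [exact Hd1|].
  intros s Hs. rewrite Hc by exact Hs. rewrite cos_acos; [reflexivity|].
  assert (0 <= al x0 ^ 2) by apply pow2_ge_0. assert (0 <= be x0 ^ 2) by apply pow2_ge_0.
  split; nra.
Qed.

Section TangentPosition.
Variables (gamma : R -> vec3) (A : R -> R).
Hypothesis Hg : forall s, inI a b s -> vderiv gamma s (T s).
Hypothesis Hnormal : forall s, inI a b s -> dot (gamma s) (U s) = 0.
Hypothesis Hkn : forall s, inI a b s -> kn s <> 0.
Hypothesis Hkn_cont : forall s, inI a b s -> continuity_pt kn s.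
Hypothesis Htaug_cont : forall s, inI a b s -> continuity_pt taug s.
Hypothesis HA : forall s, inI a b s -> is_derive A s (taug s * kg s / kn s).

Definition q (t : R) : R := dot (gamma t) (T t).
Definition m (t : R) : R := dot (gamma t) (V t).

Lemma q_deriv s : inI a b s -> is_derive q s (1 + kg s * m s).
Proof.
  intros Hs. eapply is_derive_eq; [apply dot_deriv; [apply Hg|apply HdT]; exact Hs|].
  rewrite HTT, (dot_sym (gamma s)), dot_lincomb2, (dot_sym (U s)), Hnormal by exact Hs.
  unfold m. rewrite dot_sym. ring.
Qed.

Lemma m_deriv s : inI a b s -> is_derive m s (- kg s * q s).
Proof.
  intros Hs. destruct (V_orthonormal s Hs) as [_ [HVT _]].
  eapply is_derive_eq; [apply dot_deriv; [apply Hg|apply HdV]; exact Hs|].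
  rewrite (dot_sym (T s)), HVT, (dot_sym (gamma s)), dot_lincomb2, (dot_sym (U s)), Hnormal
    by exact Hs.
  unfold q. rewrite dot_sym. ring.
Qed.

(* Differentiating <gamma, U> = 0. *)
Lemma normal_relation s : inI a b s -> kn s * q s + taug s * m s = 0.
Proof.
  intros Hs.
  assert (D := dot_deriv gamma U s _ _ (Hg s Hs) (HdU s Hs)).
  assert (Z := deriv_of_constant a b _ 0 s _ Hnormal Hs D).
  rewrite HTU, (dot_sym (gamma s)), dot_lincomb2 in Z by exact Hs.
  unfold q, m. rewrite (dot_sym (gamma s)), (dot_sym (gamma s) (V s)). lra.
Qed.

Lemma q_eq s : inI a b s -> q s = - taug s * m s / kn s.
Proof.
  intros Hs. assert (E := normal_relation s Hs). field_simplify_eq; [lra|exact (Hkn s Hs)].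
Qed.

Definition C (t : R) : R := m t * exp (- A t).

Lemma C_constant : constant_on a b C.
Proof.
  apply constant_of_deriv_zero. intros s Hs. eapply is_derive_eq.
  - apply is_derive_Rmult; [apply m_deriv; exact Hs|].
    apply is_derive_exp_opp, HA; exact Hs.
  - rewrite q_eq by exact Hs. field. exact (Hkn s Hs).
Qed.

(* m never vanishes: otherwise C = 0, so m = q = 0 on I, against q' = 1 + kg m. *)
Lemma m_nonzero s : inI a b s -> m s <> 0.
Proof.
  intros Hs Hm0.
  assert (Hm : forall t, inI a b t -> m t = 0).
  { intros t Ht. assert (Ct : C t = 0)
      by (rewrite (C_constant t s Ht Hs); unfold C; rewrite Hm0; ring).
    unfold C in Ct. assert (0 < exp (- A t)) by apply exp_pos. nra. }
  assert (Hq : forall t, inI a b t -> q t = 0).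
  { intros t Ht. rewrite q_eq, Hm by exact Ht. field. exact (Hkn t Ht). }
  assert (Z := deriv_of_constant a b q 0 s _ Hq Hs (q_deriv s Hs)).
  rewrite Hm0 in Z. lra.
Qed.

Lemma curvature_sum_pos s : inI a b s -> 0 < kn s ^ 2 + taug s ^ 2.
Proof.
  intros Hs. assert (0 < kn s ^ 2) by (apply pow2_gt_0; exact (Hkn s Hs)).
  assert (0 <= taug s ^ 2) by apply pow2_ge_0. lra.
Qed.

Definition G (t : R) : R := m t * Rpower (kn t ^ 2 + taug t ^ 2) (3 / 2) / kn t ^ 2.

Lemma G_sq s : inI a b s -> G s ^ 2 = m s ^ 2 * (kn s ^ 2 + taug s ^ 2) ^ 3 / kn s ^ 4.
Proof.
  intros Hs. rewrite <- Rpower_three_halves_sq by exact (curvature_sum_pos s Hs).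
  unfold G. field. exact (Hkn s Hs).
Qed.

Lemma G_nonzero s : inI a b s -> G s <> 0.
Proof.
  intros Hs. assert (HP : 0 < Rpower (kn s ^ 2 + taug s ^ 2) (3 / 2))
    by (unfold Rpower; apply exp_pos).
  unfold G, Rdiv. apply Rmult_integral_contrapositive_currified.
  - apply Rmult_integral_contrapositive_currified; [apply m_nonzero, Hs|lra].
  - apply Rinv_neq_0_compat, pow_nonzero, Hkn, Hs.
Qed.

Lemma m_continuous s : inI a b s -> continuity_pt m s.
Proof. intros Hs. exact (is_derive_continuity_pt m s _ (m_deriv s Hs)). Qed.

Lemma G_continuous s : inI a b s -> continuity_pt G s.
Proof.
  intros Hs.
  apply (continuity_pt_div (fun t => m t * Rpower (kn t ^ 2 + taug t ^ 2) (3 / 2))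
           (fun t => kn t ^ 2)).
  - apply (continuity_pt_mult m (fun t => Rpower (kn t ^ 2 + taug t ^ 2) (3 / 2))).
    + apply m_continuous, Hs.
    + apply continuity_pt_Rpower; [|apply curvature_sum_pos, Hs].
      apply (continuity_pt_plus (fun t => kn t ^ 2) (fun t => taug t ^ 2));
        apply continuity_pt_sq; auto.
  - apply continuity_pt_sq; auto.
  - apply pow_nonzero, Hkn, Hs.
Qed.

Definition F (t : R) : R := kn t ^ 2 / Rpower (kn t ^ 2 + taug t ^ 2) (3 / 2) * exp (- A t).

Lemma F_eq_C_div_G s : inI a b s -> F s = C s / G s.
Proof.
  intros Hs. assert (HP : 0 < Rpower (kn s ^ 2 + taug s ^ 2) (3 / 2))
    by (unfold Rpower; apply exp_pos).
  unfold F, C, G. field. repeat split; [apply Hkn, Hs|lra|apply m_nonzero, Hs].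
Qed.

Lemma C_nonzero s : inI a b s -> C s <> 0.
Proof.
  intros Hs. unfold C. apply Rmult_integral_contrapositive_currified;
    [apply m_nonzero, Hs|apply Rgt_not_eq, exp_pos].
Qed.

Lemma F_constant_iff_G_constant : constant_on a b F <-> constant_on a b G.
Proof.
  assert (HG : forall s, inI a b s -> G s = C s / F s).
  { intros s Hs. rewrite F_eq_C_div_G by exact Hs.
    field. split; [apply G_nonzero, Hs|apply C_nonzero, Hs]. }
  split; intros Hc x y Hx Hy.
  - rewrite HG, HG, (Hc x y), (C_constant x y) by assumption. reflexivity.
  - rewrite F_eq_C_div_G, F_eq_C_div_G, (Hc x y), (C_constant x y) by assumption.
    reflexivity.
Qed.

(* For a fixed vector d with <U, d> = c, the binormal coordinate is
   c (kn m - taug q): the Wronskian-like W = <T,d> m - <V,d> q vanishes. *)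
Lemma fixed_vector_V_coord d c :
  (forall s, inI a b s -> dot (U s) d = c) ->
  forall s, inI a b s -> dot (V s) d = c * (kn s * m s - taug s * q s).
Proof.
  intros Hd s Hs.
  set (W := fun t => dot (T t) d * m t - dot (V t) d * q t).
  assert (W0 : forall t, inI a b t -> W t = 0).
  { intros t Ht. apply (Rmult_eq_reg_l (kn t)); [|apply Hkn, Ht].
    transitivity (m t * (kn t * dot (T t) d + taug t * dot (V t) d)
                  - dot (V t) d * (kn t * q t + taug t * m t)); [unfold W; ring|].
    rewrite (fixed_vector_relation d c Hd t Ht), normal_relation by exact Ht. ring. }
  assert (DW : is_derive W s (kn s * c * m s - taug s * c * q s - dot (V s) d)).
  { eapply is_derive_eq.
    - apply is_derive_Rminus; apply is_derive_Rmult;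
        auto using coordT_deriv, coordV_deriv, m_deriv, q_deriv.
    - rewrite Hd by exact Hs. ring. }
  assert (Z := deriv_of_constant a b W 0 s _ W0 Hs DW). lra.
Qed.

(* Isophotic curves have constant G, because c^2 (1 + G^2) = |d|^2 = 1. *)
Lemma isophotic_G_constant : isophotic a b U -> constant_on a b G.
Proof.
  intros [d [phi [Hd1 Hd]]]. set (c := cos phi) in Hd.
  assert (Key : forall s, inI a b s -> c ^ 2 * (1 + G s ^ 2) = 1).
  { intros s Hs.
    assert (N := tangential_norm (kn s) (taug s) (m s) (q s) c _ _ (Hkn s Hs)
                   (normal_relation s Hs) (fixed_vector_relation d c Hd s Hs)
                   (fixed_vector_V_coord d c Hd s Hs)).
    assert (P := frame_parseval d s Hs).
    rewrite Hd1, Hd, N, <- G_sq in P by exact Hs. lra. }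
  destruct (Req_dec c 0) as [Hc0|Hc0].
  { intros x y Hx Hy. assert (K := Key x Hx). rewrite Hc0 in K. lra. }
  apply (constant_of_sq_constant a b G ((1 - c ^ 2) / c ^ 2));
    [exact G_continuous|exact G_nonzero|].
  intros s Hs. assert (K := Key s Hs). field_simplify_eq; [lra|exact Hc0].
Qed.

Lemma position_norm s : inI a b s ->
  m s ^ 2 + q s ^ 2 = m s ^ 2 * (kn s ^ 2 + taug s ^ 2) / kn s ^ 2.
Proof. intros Hs. rewrite q_eq by exact Hs. field. apply Hkn, Hs. Qed.

(* The common factor of the tangential coefficients of the isophote
   direction, u = c (kn^2 + taug^2) / kn. *)
Definition u (c t : R) : R := c * (kn t ^ 2 + taug t ^ 2) / kn t.

(* When G = K is constant, u^2 = c^2 K^2 / |gamma|^2, which exhibits u as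
   differentiable, with u' = taug c / m. *)
Lemma u_deriv c K : c <> 0 -> (forall s, inI a b s -> G s = K) ->
  forall s, inI a b s -> is_derive (u c) s (taug s * c / m s).
Proof.
  intros Hc HK s Hs.
  set (r := fun t => m t ^ 2 + q t ^ 2).
  assert (Hr : 0 < r s) by (assert (0 < m s ^ 2) by (apply pow2_gt_0, m_nonzero, Hs);
                            assert (0 <= q s ^ 2) by apply pow2_ge_0; unfold r; lra).
  assert (Dr : is_derive r s (2 * q s)).
  { eapply is_derive_eq; [apply is_derive_Rplus; apply is_derive_pow;
      [apply m_deriv|apply q_deriv]; exact Hs|]. simpl. ring. }
  assert (Hkn2 := curvature_sum_pos s Hs). assert (Hkns := Hkn s Hs).
  assert (Hms := m_nonzero s Hs).
  eapply is_derive_eq.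
  - apply (is_derive_of_sq (u c) (fun t => c ^ 2 * K ^ 2 / r t)).
    + apply (continuity_pt_div (fun t => c * (kn t ^ 2 + taug t ^ 2)) kn); auto.
      apply (continuity_pt_mult (fun _ => c) (fun t => kn t ^ 2 + taug t ^ 2)).
      * apply continuity_pt_const. intros x y; reflexivity.
      * apply (continuity_pt_plus (fun t => kn t ^ 2) (fun t => taug t ^ 2));
          apply continuity_pt_sq; auto.
    + unfold u. apply Rmult_integral_contrapositive_currified;
        [apply Rmult_integral_contrapositive_currified; lra|apply Rinv_neq_0_compat, Hkns].
    + apply (filter_imp (inI a b)); [|apply inI_locally, Hs].
      intros t Ht. unfold u, r. rewrite position_norm, <- (HK t Ht), G_sq by exact Ht.
      assert (0 < kn t ^ 2 + taug t ^ 2) by apply curvature_sum_pos, Ht.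
      field. repeat split; [apply Hkn, Ht|lra|apply m_nonzero, Ht].
    + apply is_derive_div; [apply is_derive_Rconst|exact Dr|lra].
  - unfold r, u. rewrite <- (HK s Hs), G_sq, q_eq by exact Hs.
    assert (0 < (m s * kn s) ^ 2)
      by (apply pow2_gt_0, Rmult_integral_contrapositive_currified; assumption).
    assert (0 <= (- taug s * m s) ^ 2) by apply pow2_ge_0.
    field. repeat split; lra.
Qed.

(* Conversely, constant G = K yields the isophote direction
   d = q u T + m u V + c U with c = 1 / sqrt (1 + K^2). *)
Lemma G_constant_isophotic x0 : inI a b x0 -> constant_on a b G -> isophotic a b U.
Proof.
  intros Hx0 HG. set (K := G x0).
  assert (HK : forall s, inI a b s -> G s = K) by (intros s Hs; apply HG; auto).
  set (w := sqrt (1 + K ^ 2)).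
  assert (Hw : w ^ 2 = 1 + K ^ 2) by (apply pow2_sqrt; nra).
  assert (Hw0 : 0 < w) by (apply sqrt_lt_R0; nra).
  set (c := / w).
  assert (Hc2 : c ^ 2 * (1 + K ^ 2) = 1) by (unfold c; rewrite <- Hw; field; lra).
  assert (Hc : c <> 0) by (intros Hc0; rewrite Hc0 in Hc2; lra).
  assert (Hrel : forall s, inI a b s -> kn s * (q s * u c s) + taug s * (m s * u c s) = 0).
  { intros s Hs. transitivity (u c s * (kn s * q s + taug s * m s)); [ring|].
    rewrite normal_relation by exact Hs. ring. }
  apply (isophotic_of_darboux_solution (fun t => q t * u c t) (fun t => m t * u c t) c x0 Hx0);
    [intros s Hs..|]; try exact (Hrel s Hs).
  - eapply is_derive_eq; [apply is_derive_Rmult; [apply q_deriv|apply (u_deriv c K)]; auto|].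
    unfold u. rewrite q_eq by exact Hs. field. split; [apply Hkn, Hs|apply m_nonzero, Hs].
  - eapply is_derive_eq; [apply is_derive_Rmult; [apply m_deriv|apply (u_deriv c K)]; auto|].
    field. apply m_nonzero, Hs.
  - assert (Hbe : m x0 * u c x0 = c * (kn x0 * m x0 - taug x0 * q x0)).
    { unfold u. rewrite q_eq by exact Hx0. field. apply Hkn, Hx0. }
    rewrite (tangential_norm _ _ _ _ c _ _ (Hkn x0 Hx0) (normal_relation x0 Hx0) (Hrel x0 Hx0) Hbe),
      <- G_sq, HK by exact Hx0.
    rewrite <- Hc2. ring.
Qed.

End TangentPosition.

End DarbouxFrame.

Theorem theorem4p2 (a b : Rbar) (gamma T V U : R -> vec3)
  (kg kn taug mu1 mu2 A : R -> R) :
  Rbar_lt a b ->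
  (* unit speed curve, T = gamma' *)
  (forall s, inI a b s -> vderiv gamma s (T s)) ->
  (* Darboux frame {T, V, U}: T, U orthonormal, V = U x T *)
  (forall s, inI a b s -> dot (T s) (T s) = 1) ->
  (forall s, inI a b s -> dot (U s) (U s) = 1) ->
  (forall s, inI a b s -> dot (T s) (U s) = 0) ->
  (forall s, inI a b s -> V s = cross (U s) (T s)) ->
  (* Darboux equations *)
  (forall s, inI a b s ->
     vderiv T s (vadd (vscale (kg s) (V s)) (vscale (kn s) (U s)))) ->
  (forall s, inI a b s ->
     vderiv V s (vadd (vscale (- kg s) (T s)) (vscale (taug s) (U s)))) ->
  (forall s, inI a b s ->
     vderiv U s (vadd (vscale (- kn s) (T s)) (vscale (- taug s) (V s)))) ->
  (* the curvatures are continuous (the surface and curve are smooth) *)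
  (forall s, inI a b s -> continuous kg s /\ continuous kn s /\ continuous taug s) ->
  (* nowhere-vanishing normal curvature *)
  (forall s, inI a b s -> kn s <> 0) ->
  (* position vector in the plane spanned by T and V *)
  (forall s, inI a b s -> ex_derive mu1 s /\ ex_derive mu2 s) ->
  (forall s, inI a b s ->
     gamma s = vadd (vscale (mu1 s) (T s)) (vscale (mu2 s) (V s))) ->
  (* A is an antiderivative of taug * kg / kn on I *)
  (forall s, inI a b s -> is_derive A s (taug s * kg s / kn s)) ->
  (isophotic a b U <->
   exists c : R, forall s, inI a b s ->
     kn s ^ 2 / Rpower (kn s ^ 2 + taug s ^ 2) (3 / 2) * exp (- A s) = c).
Proof.
  intros Hab Hg HTT HUU HTU HV HdT HdV HdU Hcont Hkn _ Hgam HA.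
  assert (Hnormal : forall s, inI a b s -> dot (gamma s) (U s) = 0).
  { intros s Hs. rewrite Hgam, dot_lincomb2, HTU, HV, cross_dot_l by exact Hs. ring. }
  assert (Hkn_cont : forall s, inI a b s -> continuity_pt kn s).
  { intros s Hs. apply continuity_pt_filterlim. exact (proj1 (proj2 (Hcont s Hs))). }
  assert (Htaug_cont : forall s, inI a b s -> continuity_pt taug s).
  { intros s Hs. apply continuity_pt_filterlim. exact (proj2 (proj2 (Hcont s Hs))). }
  destruct (inI_nonempty a b Hab) as [x0 Hx0].
  transitivity (constant_on a b (G V kn taug gamma)).
  - split; intros Hiso.
    + eapply (isophotic_G_constant a b T V U kg kn taug); eassumption.
    + eapply (G_constant_isophotic a b T V U kg kn taug); eassumption.
  - transitivity (constant_on a b (F kn taug A)).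
    + symmetry. eapply (F_constant_iff_G_constant a b T V U kg kn taug); eassumption.
    + apply constant_on_exists. exact Hab.
Qed.
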